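(* For every definable relation $R(\bar x,\bar y)$, with $\bar x$ of length $k$ and $\bar y=(y_1,\dots,y_l)$, there is a natural number $K$ such that for every $\bar a\in\mathcal M^k$ the following are equivalent: (1) $R(\bar a,\bar b)$ holds for some linearly independent tuple $\bar b\in\mathcal M^l$ with $\mathcal V(\bar a)\cap\mathcal V(\bar b)=\{\vec 0\}$; (2) $R(\bar a,\bar b)$ holds for every linearly independent tuple $\bar b\in\mathcal M^l$ with $\mathcal V(\bar a)\cap\mathcal V(\bar b)=\{\vec 0\}$; (3) $(\exists_{>K}\bar y)R(\bar a,\bar y)$.
   Context: $\mathcal M$ denotes the $\mathbb Q$-vector space $\mathbb Q^{<\omega}$ of all sequences of rationals with only finitely many nonzero terms, with zero vector $\vec 0$, regarded as the structure $\langle\mathcal M;+\rangle$. A relation on $\mathcal M$ is definable if it is first-order definable without parameters in $\langle\mathcal M;+\rangle$. $\mathcal V(\bar a)$ denotes the $\mathbb Q$-linear span of the entries of $\bar a$. The quantifier $(\exists_{>K}y)Q(y)$ means ''there are at least $K+1$ pairwise distinct $y$ with $Q(y)$''; for tuples, $(\exists_{>K}y_1,\dots,y_l)Q(\bar y):=(\exists_{>K}y_1)(\exists_{>K}y_2,\dots,y_l)Q(\bar y)$. *)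

From HB Require Import structures.
From mathcomp Require Import all_boot all_order all_algebra.
Set Implicit Arguments. Unset Strict Implicit. Unset Printing Implicit Defensive.
Import Order.TTheory GRing.Theory Num.Theory.
Local Open Scope ring_scope.

(* The carrier M = Q^{<omega}: sequences of rationals with finitely many
   nonzero terms.  We represent such a sequence (q_0, q_1, ...) by the
   polynomial with coefficient sequence p`_i = q_i; {poly rat} is exactly
   the set of finitely supported rational sequences, with pointwise
   addition, zero vector 0 and pointwise rational scaling. *)
Definition M : Type := {poly rat}.

Inductive term : Type :=
| TVar : nat -> term
| TAdd : term -> term -> term.

Inductive formula : Type :=
| FEq  : term -> term -> formula
| FNot : formula -> formula
| FAnd : formula -> formula -> formula
| FOr  : formula -> formula -> formula
| FEx  : nat -> formula -> formula
| FAll : nat -> formula -> formula.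

Fixpoint eval_term (e : nat -> M) (t : term) : M :=
  match t with
  | TVar i => e i
  | TAdd t1 t2 => eval_term e t1 + eval_term e t2
  end.

Definition upd (e : nat -> M) (i : nat) (v : M) : nat -> M :=
  fun m => if m == i then v else e m.

Fixpoint sat (e : nat -> M) (f : formula) : Prop :=
  match f with
  | FEq t1 t2 => eval_term e t1 = eval_term e t2
  | FNot g => ~ sat e g
  | FAnd g h => sat e g /\ sat e h
  | FOr g h => sat e g \/ sat e h
  | FEx i g => exists v : M, sat (upd e i v) g
  | FAll i g => forall v : M, sat (upd e i v) g
  end.

Definition definable (k l : nat) (R : ('I_k -> M) -> ('I_l -> M) -> Prop) :
  Prop :=
  exists phi : formula, forall e : nat -> M,
    R (fun i : 'I_k => e i) (fun j : 'I_l => e (k + j)%N) <-> sat e phi.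

Definition in_span (n : nat) (a : 'I_n -> M) (v : M) : Prop :=
  exists c : 'I_n -> rat, v = \sum_(i < n) c i *: a i.

Definition lin_indep (n : nat) (b : 'I_n -> M) : Prop :=
  forall c : 'I_n -> rat, \sum_(i < n) c i *: b i = 0 -> forall i, c i = 0.

Definition trivial_meet (k l : nat) (a : 'I_k -> M) (b : 'I_l -> M) : Prop :=
  forall v : M, in_span a v -> in_span b v -> v = 0.

Definition exists_gt1 (K : nat) (P : M -> Prop) : Prop :=
  exists s : seq M, size s = K.+1 /\ uniq s /\ forall y, y \in s -> P y.

Fixpoint exists_gt (K l : nat) (Q : seq M -> Prop) : Prop :=
  match l with
  | 0 => Q [::]
  | l'.+1 => exists_gt1 K (fun y => exists_gt K l' (fun ys => Q (y :: ys)))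
  end.

From HB Require Import structures.
From mathcomp Require Import all_boot all_order all_algebra.
From mathcomp Require Import zify.
From Stdlib Require Import Classical FunctionalExtensionality.
Import Order.TTheory GRing.Theory Num.Theory.
Local Open Scope ring_scope.

(* A formula of <M;+> only tests integer linear relations among the values of
   its variables, with coefficients bounded in terms of the formula.  Two
   assignments satisfying the same such relations (up to a bound that is
   squared at each quantifier) satisfy the same formulas: a witness x for a
   quantified variable either satisfies a bounded relation with a nonzero
   coefficient on it, and is matched by the solution of that relation on the
   other side, or satisfies none, and is matched by a monomial X^D of degree
   larger than everything in sight.
   A tuple b that is independent with V(a) ∩ V(b) = 0 satisfies only
   relations vanishing on b, so all such b are interchangeable for R, and
   monomials of large degree supply as many of them as needed; this gives
   (1) <-> (2) -> (3).  Conversely each of the K bounded relations excludes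
   at most one value for the next coordinate of b, so the counting quantifier
   lets us choose b coordinate by coordinate satisfying no relation that
   involves it. *)

(** * Bounded integer relations *)

Definition zcomb (B : nat) (e : nat -> M) (f : nat -> int) : M :=
  \sum_(0 <= i < B) e i *~ f i.

Definition bounded (N : nat) (f : nat -> int) : Prop :=
  forall i, `|f i| <= N%:Z.

Definition rel_equiv (B N : nat) (e e' : nat -> M) : Prop :=
  forall f, bounded N f -> (zcomb B e f = 0 <-> zcomb B e' f = 0).

Lemma rel_equiv_sym {B N e e'} : rel_equiv B N e e' -> rel_equiv B N e' e.
Proof. by move=> eqv f bf; apply: iff_sym; apply: eqv. Qed.

Lemma rel_equiv_le B N N' e e' :
  (N <= N')%N -> rel_equiv B N' e e' -> rel_equiv B N e e'.
Proof.
by move=> leNN' eqv f bf; apply: eqv => i; rewrite (le_trans (bf i)) ?lez_nat.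
Qed.

Lemma sum_nat_mulrn_eq (V : nmodType) B j (F : nat -> V) :
  (j < B)%N -> \sum_(0 <= i < B) F i *+ (i == j) = F j.
Proof.
move=> ltjB; rewrite (eq_bigr (fun i => if i == j then F i else 0)).
  by rewrite -big_mkcond big_nat1_eq leq0n ltjB.
by move=> i _; case: eqP.
Qed.

Lemma zcombB B e f g :
  zcomb B e (fun j => f j - g j) = zcomb B e f - zcomb B e g.
Proof. by rewrite /zcomb -sumrB; apply: eq_bigr => j _; rewrite mulrzBr. Qed.

Lemma zcombMz B e f z : zcomb B e (fun j => f j * z) = zcomb B e f *~ z.
Proof. by rewrite /zcomb mulrz_suml; apply: eq_bigr => j _; rewrite mulrzA. Qed.

Lemma eq_zcomb B e f g :
  (forall i, (i < B)%N -> f i = g i) -> zcomb B e f = zcomb B e g.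
Proof. by move=> eq_fg; apply: eq_big_nat => i /andP[_ /eq_fg ->]. Qed.

Lemma eq_zcomb_supp B e e' f :
  (forall i, (i < B)%N -> f i = 0 \/ e i = e' i) -> zcomb B e f = zcomb B e' f.
Proof.
by move=> agree; apply: eq_big_nat => i /andP[_ /agree[->|->]]; rewrite ?mulr0z.
Qed.

Lemma zcomb_upd B e i x f : (i < B)%N ->
  zcomb B (upd e i x) f = zcomb B e f + (x - e i) *~ f i.
Proof.
move=> ltiB; rewrite /zcomb.
rewrite -(@sum_nat_mulrn_eq _ _ _ (fun m => (x - e i) *~ f m) ltiB).
rewrite -big_split /=; apply: eq_bigr => m _; rewrite /upd.
by case: eqP => [->|_]; rewrite ?mulr1n ?mulr0n ?addr0 // mulrzBl addrC subrK.
Qed.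

Definition solve_at (B : nat) (e : nat -> M) (i : nat) (f : nat -> int) : M :=
  e i - ((f i)%:~R)^-1 *: zcomb B e f.

Lemma zcomb_upd_eq0 B e i x f : (i < B)%N -> f i != 0 ->
  (zcomb B (upd e i x) f == 0) = (x == solve_at B e i f).
Proof.
move=> ltiB nzfi; have nzc : (f i)%:~R != 0 :> rat by rewrite intr_eq0.
rewrite zcomb_upd // -scaler_int addrC addr_eq0.
rewrite -(inj_eq (scalerI (invr_neq0 nzc))) scalerA mulVf // scale1r scalerN.
by rewrite subr_eq addrC.
Qed.

Lemma rel_equiv_upd_dependent B n e e' i x f :
  (i < B)%N -> bounded n f -> f i != 0 -> zcomb B (upd e i x) f = 0 ->
  rel_equiv B (2 * (n * n)) e e' ->
  rel_equiv B n (upd e i x) (upd e' i (solve_at B e' i f)).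
Proof.
move=> ltiB bf nzfi fx eqv g bg.
have fy : zcomb B (upd e' i (solve_at B e' i f)) f = 0.
  by apply/eqP; rewrite zcomb_upd_eq0.
pose h j := g j * f i - f j * g i.
have bh : bounded (2 * (n * n)) h.
  move=> j; have := bg j; have := bf j; have := bg i; have := bf i.
  by rewrite /h; nia.
(* [h] eliminates the updated coordinate between [g] and the relation [f]. *)
have elim_i e1 z : zcomb B (upd e1 i z) f = 0 ->
    (zcomb B (upd e1 i z) g = 0 <-> zcomb B e1 h = 0).
  move=> fz; have hi0 : h i = 0 by rewrite /h mulrC subrr.
  have -> : zcomb B e1 h = zcomb B (upd e1 i z) h.
    by rewrite zcomb_upd // hi0 mulr0z addr0.
  rewrite /h zcombB !zcombMz fz mul0rz subr0.
  split=> [-> | /eqP]; first by rewrite mul0rz.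
  by rewrite -scaler_int scaler_eq0 intr_eq0 (negbTE nzfi) => /eqP.
by rewrite (elim_i _ _ fx) (elim_i _ _ fy); apply: eqv.
Qed.

Definition deg_bound (B : nat) (e : nat -> M) : nat := \max_(j < B) size (e j).

Lemma coef_deg_bound B (e : nat -> M) j :
  (j < B)%N -> (e j)`_(deg_bound B e) = 0.
Proof.
move=> ltjB; rewrite nth_default //.
exact: (@leq_bigmax _ (fun j : 'I_B => size (e j)) (Ordinal ltjB)).
Qed.

Lemma coef_zcomb_deg_bound B (e : nat -> M) f :
  (zcomb B e f)`_(deg_bound B e) = 0.
Proof.
rewrite /zcomb coef_sum big1_seq // => j /andP[_].
rewrite mem_index_iota => /andP[_ ltjB].
by rewrite coefMrz coef_deg_bound ?mul0rz.
Qed.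

Lemma rel_equiv_upd_generic B n e e' i x : (i < B)%N ->
  (forall f, bounded n f -> f i != 0 -> zcomb B (upd e i x) f != 0) ->
  rel_equiv B n e e' ->
  rel_equiv B n (upd e i x) (upd e' i 'X^(deg_bound B e')).
Proof.
move=> ltiB xfree eqv g bg.
have [gi0|nzgi] := eqVneq (g i) 0.
  by rewrite !zcomb_upd // gi0 !mulr0z !addr0; apply: eqv.
split=> [gx|]; first by have := xfree g bg nzgi; rewrite gx eqxx.
rewrite zcomb_upd // => /(congr1 (fun p : M => p`_(deg_bound B e'))) /eqP.
rewrite coefD coef_zcomb_deg_bound coefMrz coefB coefXn eqxx.
rewrite coef_deg_bound // add0r subr0 coef0.
by rewrite mulrz_eq0 oner_eq0 orbF (negbTE nzgi).
Qed.

Lemma rel_equiv_upd {B n e e' i} x : (i < B)%N ->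
  rel_equiv B (2 * (n * n)) e e' ->
  exists y, rel_equiv B n (upd e i x) (upd e' i y).
Proof.
move=> ltiB eqv.
have [[f [bf nzfi fx]] | xfree] := classic
  (exists f, [/\ bounded n f, f i != 0 & zcomb B (upd e i x) f = 0]).
  by exists (solve_at B e' i f); apply: rel_equiv_upd_dependent.
exists 'X^(deg_bound B e'); apply: rel_equiv_upd_generic => [//|f bf nzfi|].
  by apply/eqP => fx; apply: xfree; exists f.
by apply: rel_equiv_le eqv; nia.
Qed.

(** * Formulas only see bounded relations *)

Fixpoint term_count (t : term) (i : nat) : nat :=
  match t with
  | TVar j => (i == j : nat)
  | TAdd t1 t2 => (term_count t1 i + term_count t2 i)%N
  end.

Fixpoint term_size (t : term) : nat :=
  match t with
  | TVar _ => 1%N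
  | TAdd t1 t2 => (term_size t1 + term_size t2)%N
  end.

Fixpoint term_var_bound (t : term) : nat :=
  match t with
  | TVar j => j.+1
  | TAdd t1 t2 => maxn (term_var_bound t1) (term_var_bound t2)
  end.

Lemma term_count_le t i : (term_count t i <= term_size t)%N.
Proof.
by elim: t => [j|t1 IH1 t2 IH2] /=; [case: (i == j) | apply: leq_add].
Qed.

Lemma eval_term_count B e t : (term_var_bound t <= B)%N ->
  eval_term e t = zcomb B e (fun i => (term_count t i)%:Z).
Proof.
rewrite /zcomb; under eq_bigr do rewrite -pmulrn.
elim: t => [j|t1 IH1 t2 IH2] /=.
  by move=> ltjB; rewrite sum_nat_mulrn_eq.
rewrite geq_max => /andP[le1 le2]; rewrite IH1 // IH2 // -big_split /=.
by apply: eq_bigr => i _; rewrite mulrnDr.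
Qed.

Lemma eval_term_eq_zcomb B e t1 t2 :
  (term_var_bound t1 <= B)%N -> (term_var_bound t2 <= B)%N ->
  eval_term e t1 = eval_term e t2 <->
  zcomb B e (fun i => (term_count t1 i)%:Z - (term_count t2 i)%:Z) = 0.
Proof.
move=> le1 le2; rewrite zcombB -(eval_term_count B e t1 le1).
rewrite -(eval_term_count B e t2 le2).
by split=> [-> | /eqP]; [rewrite subrr | rewrite subr_eq0 => /eqP].
Qed.

Fixpoint var_bound (phi : formula) : nat :=
  match phi with
  | FEq t1 t2 => maxn (term_var_bound t1) (term_var_bound t2)
  | FNot psi => var_bound psi
  | FAnd psi chi | FOr psi chi => maxn (var_bound psi) (var_bound chi)
  | FEx i psi | FAll i psi => maxn i.+1 (var_bound psi)
  end.

(* Coefficient bound up to which relations must agree for [phi] to be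
   preserved; each quantifier squares it, as in [rel_equiv_upd]. *)
Fixpoint rel_rank (phi : formula) : nat :=
  match phi with
  | FEq t1 t2 => (term_size t1 + term_size t2)%N
  | FNot psi => rel_rank psi
  | FAnd psi chi | FOr psi chi => maxn (rel_rank psi) (rel_rank chi)
  | FEx _ psi | FAll _ psi => (2 * (rel_rank psi * rel_rank psi))%N
  end.

Lemma sat_rel_equiv B phi : (var_bound phi <= B)%N ->
  forall e e', rel_equiv B (rel_rank phi) e e' -> (sat e phi <-> sat e' phi).
Proof.
elim: phi => [t1 t2|p IH|p IH1 q IH2|p IH1 q IH2|i p IH|i p IH] /=.
- rewrite geq_max => /andP[le1 le2] e e' eqv.
  rewrite !(eval_term_eq_zcomb B) //; apply: eqv => j.
  by have := term_count_le t1 j; have := term_count_le t2 j; lia.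
- by move=> leB e e' eqv; rewrite (IH leB e e' eqv).
- rewrite geq_max => /andP[le1 le2] e e' eqv.
  by rewrite (IH1 le1 e e') ?(IH2 le2 e e') //; apply: rel_equiv_le eqv;
    rewrite ?leq_maxl ?leq_maxr.
- rewrite geq_max => /andP[le1 le2] e e' eqv.
  by rewrite (IH1 le1 e e') ?(IH2 le2 e e') //; apply: rel_equiv_le eqv;
    rewrite ?leq_maxl ?leq_maxr.
- rewrite geq_max => /andP[ltiB leB] e e' eqv; split=> -[v sat_v].
    have [w eqv_w] := rel_equiv_upd v ltiB eqv.
    by exists w; apply/(IH leB _ _ eqv_w).
  have [w eqv_w] := rel_equiv_upd v ltiB (rel_equiv_sym eqv).
  by exists w; apply/(IH leB _ _ (rel_equiv_sym eqv_w)).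
- rewrite geq_max => /andP[ltiB leB] e e' eqv; split=> sat_all v.
    have [w eqv_w] := rel_equiv_upd v ltiB (rel_equiv_sym eqv).
    by apply/(IH leB _ _ (rel_equiv_sym eqv_w)).
  have [w eqv_w] := rel_equiv_upd v ltiB eqv.
  by apply/(IH leB _ _ eqv_w).
Qed.

(** * Generic tuples *)

Lemma nth_map_enum n (b : 'I_n -> M) (j : 'I_n) :
  nth 0 [seq b i | i <- enum 'I_n] j = b j.
Proof. by rewrite (nth_map j) ?size_enum_ord // nth_ord_enum. Qed.

Lemma fun_nth_map_enum n (b : 'I_n -> M) :
  (fun j : 'I_n => nth 0 [seq b i | i <- enum 'I_n] j) = b.
Proof. by apply: functional_extensionality => j; rewrite nth_map_enum. Qed.

Definition env {k} (a : 'I_k -> M) (s : seq M) : nat -> M :=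
  nth 0 ([seq a i | i <- enum 'I_k] ++ s).

Lemma env_ord k (a : 'I_k -> M) s (i : 'I_k) : env a s i = a i.
Proof. by rewrite /env nth_cat size_map size_enum_ord ltn_ord nth_map_enum. Qed.

Lemma env_shift k (a : 'I_k -> M) s j : env a s (k + j) = nth 0 s j.
Proof.
by rewrite /env nth_cat size_map size_enum_ord ltnNge leq_addr addKn.
Qed.

Lemma env_rcons k (a : 'I_k -> M) s y :
  env a (rcons s y) = upd (env a s) (k + size s) y.
Proof.
apply: functional_extensionality => m; rewrite /env -rcons_cat /upd nth_rcons.
rewrite size_cat size_map size_enum_ord.
case: ltngtP => // gtm.
by rewrite nth_default // size_cat size_map size_enum_ord ltnW.
Qed.

Lemma definable_env {k l} {R : ('I_k -> M) -> ('I_l -> M) -> Prop} {phi}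
  (defR : forall e : nat -> M,
    R (fun i : 'I_k => e i) (fun j : 'I_l => e (k + j)%N) <-> sat e phi)
  a s : R a (fun j : 'I_l => nth 0 s j) <-> sat (env a s) phi.
Proof.
rewrite -defR; have -> : (fun i : 'I_k => env a s i) = a.
  by apply: functional_extensionality => i; rewrite env_ord.
have -> // : (fun j : 'I_l => env a s (k + j)) = (fun j : 'I_l => nth 0 s j).
by apply: functional_extensionality => j; rewrite env_shift.
Qed.

(* [s] is independent over [a] as far as relations with coefficients bounded
   by [N] among the first [B] coordinates can tell. *)
Definition generic (B N : nat) {k} (a : 'I_k -> M) (s : seq M) : Prop :=
  forall f, bounded N f -> zcomb B (env a s) f = 0 ->
  forall j, (j < size s)%N -> f (k + j)%N = 0.

Lemma generic_rel_equiv B N k (a : 'I_k -> M) s1 s2 :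
  size s1 = size s2 -> generic B N a s1 -> generic B N a s2 ->
  rel_equiv B N (env a s1) (env a s2).
Proof.
have transfer t1 t2 f : size t1 = size t2 -> generic B N a t1 -> bounded N f ->
    zcomb B (env a t1) f = 0 -> zcomb B (env a t2) f = 0.
  move=> eq_size gen1 bf f0; rewrite -f0; apply: eq_zcomb_supp => i _.
  have [ltik | /subnKC <-] := ltnP i k.
    by right; rewrite -[i]/(Ordinal ltik : nat) !env_ord.
  have [ltj | gej] := ltnP (i - k) (size t1); first by left; apply: gen1.
  by right; rewrite !env_shift !nth_default // -eq_size.
by move=> eq_size gen1 gen2 f bf; split; apply: transfer.
Qed.

Lemma zcomb_env B k (a : 'I_k -> M) s f : (k + size s <= B)%N ->
  zcomb B (env a s) f =
  \sum_(i < k) a i *~ f i + \sum_(j < size s) nth 0 s j *~ f (k + j)%N.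
Proof.
move=> leB; rewrite /zcomb.
rewrite (@big_cat_nat _ _ _ (k + size s) 0 B _ _ (leq0n _) leB) /=.
rewrite [\sum_(k + size s <= i < B) _]big1_seq ?addr0 => [|i]; last first.
  rewrite mem_index_iota => /andP[_ /andP[lei _]].
  have leki : (k <= i)%N by apply: leq_trans (leq_addr (size s) k) lei.
  by rewrite -(subnKC leki) env_shift nth_default ?mul0rz // leq_subRL.
rewrite big_mkord big_split_ord /=.
by congr (_ + _); apply: eq_bigr => i _; rewrite ?env_ord ?env_shift.
Qed.

Lemma lin_indep_generic B N k l (a : 'I_k -> M) (b : 'I_l -> M) :
  (k + l <= B)%N -> lin_indep b -> trivial_meet a b ->
  generic B N a [seq b j | j <- enum 'I_l].
Proof.
move=> leB indep meet0 f _.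
have size_s : size [seq b j | j <- enum 'I_l] = l.
  by rewrite size_map size_enum_ord.
rewrite zcomb_env size_s // => /eqP; rewrite addr_eq0 => /eqP.
set v := \sum_(j < l) _; pose c j := (f (k + j)%N)%:~R : rat.
have v_b : v = \sum_(j < l) c j *: b j.
  by apply: eq_bigr => j _; rewrite nth_map_enum scaler_int.
move=> v_a; have v0 : v = 0.
  apply: meet0; last by exists c.
  exists (fun i => - (f i)%:~R); rewrite -[v]opprK -v_a -sumrN.
  by apply: eq_bigr => i _; rewrite scaleNr scaler_int.
move=> j ltjl; apply/eqP; rewrite -(intr_eq0 rat) -/(c (Ordinal ltjl)).
by rewrite (indep c) // -v_b.
Qed.

Lemma definable_generic_indep {k l}
  {R : ('I_k -> M) -> ('I_l -> M) -> Prop} {phi}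
  (defR : forall e : nat -> M,
    R (fun i : 'I_k => e i) (fun j : 'I_l => e (k + j)%N) <-> sat e phi)
  {B} : (var_bound phi <= B)%N -> (k + l <= B)%N ->
  forall (a : 'I_k -> M) s, size s = l ->
  generic B (rel_rank phi) a s -> R a (fun j : 'I_l => nth 0 s j) ->
  forall b, lin_indep b -> trivial_meet a b -> R a b.
Proof.
move=> lephiB leB a s size_s gen_s Rs b indep_b meet_b.
rewrite -(fun_nth_map_enum _ b).
have eqv : rel_equiv B (rel_rank phi) (env a s)
                     (env a [seq b j | j <- enum 'I_l]).
  apply: generic_rel_equiv gen_s _; first by rewrite size_map size_enum_ord.
  exact: lin_indep_generic.
apply/(definable_env defR)/(sat_rel_equiv _ _ lephiB _ _ eqv).
exact/(definable_env defR).
Qed.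

(** * Monomials of large degree *)

Lemma coef_sum_monomials {l} {ns : seq nat} (c : 'I_l -> rat) (j : 'I_l) :
  uniq ns -> size ns = l ->
  (\sum_(i < l) c i *: ('X^(nth 0%N ns i) : M))`_(nth 0%N ns j) = c j.
Proof.
move=> uniq_ns size_ns; rewrite coef_sum (bigD1 j) //= coefZ coefXn eqxx mulr1.
rewrite big1 ?addr0 // => i neq_ij; rewrite coefZ coefXn.
by rewrite nth_uniq ?size_ns // val_eqE eq_sym (negbTE neq_ij) mulr0.
Qed.

Lemma lin_indep_monomials l (ns : seq nat) : uniq ns -> size ns = l ->
  lin_indep (fun j : 'I_l => 'X^(nth 0%N ns j) : M).
Proof.
move=> uniq_ns size_ns c c0 j.
by rewrite -(coef_sum_monomials c j uniq_ns size_ns) c0 coef0.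
Qed.

Lemma trivial_meet_monomials k l (a : 'I_k -> M) (ns : seq nat) :
  uniq ns -> size ns = l -> all (leq (\max_(i < k) size (a i))) ns ->
  trivial_meet a (fun j : 'I_l => 'X^(nth 0%N ns j) : M).
Proof.
move=> uniq_ns size_ns /allP geD v [ca ->] [c v_c].
have c0 j : c j = 0.
  rewrite -(coef_sum_monomials c j uniq_ns size_ns) -v_c coef_sum.
  rewrite big1 // => i _.
  rewrite coefZ nth_default ?mulr0 //.
  rewrite (leq_trans (@leq_bigmax _ (fun i : 'I_k => size (a i)) i)) ?geD //.
  by rewrite mem_nth ?size_ns.
by rewrite v_c big1 // => j _; rewrite c0 scale0r.
Qed.

Lemma exists_indep_over {k} l (a : 'I_k -> M) :
  exists b : 'I_l -> M, lin_indep b /\ trivial_meet a b.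
Proof.
set D := \max_(i < k) size (a i).
exists (fun j : 'I_l => 'X^(nth 0%N (iota D l) j)).
split; first by apply: lin_indep_monomials; rewrite ?iota_uniq ?size_iota.
apply: trivial_meet_monomials; rewrite ?iota_uniq ?size_iota //.
by apply/allP => n; rewrite mem_iota => /andP[].
Qed.

Lemma exists_gt_monomials K l D (Q : seq M -> Prop) :
  (forall ns : seq nat, size ns = l -> uniq ns -> all (leq D) ns ->
     Q [seq 'X^n | n <- ns]) ->
  exists_gt K l Q.
Proof.
elim: l D Q => [|l IH] D Q HQ /=; first exact: (HQ [::]).
exists [seq 'X^(D + i) | i <- iota 0 K.+1].
split; first by rewrite size_map size_iota.
split.
  rewrite map_inj_uniq ?iota_uniq // => m n /(congr1 (fun p : M => size p)).
  by rewrite !size_polyXn => -[/eqP]; rewrite eqn_add2l => /eqP.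
move=> y /mapP[m]; rewrite mem_iota add0n => ltmK ->.
apply: (IH (D + K.+1)%N) => ns size_ns uniq_ns geD.
apply: (HQ ((D + m)%N :: ns)); rewrite /= ?size_ns // ?uniq_ns ?leq_addr /=.
  by rewrite andbT; apply/negP => /(allP geD); lia.
by apply/allP => n /(allP geD); lia.
Qed.

Lemma exists_gt_indep K k l (a : 'I_k -> M) (Q : ('I_l -> M) -> Prop) :
  (forall b, lin_indep b -> trivial_meet a b -> Q b) ->
  exists_gt K l (fun ys => Q (fun j : 'I_l => nth 0 ys j)).
Proof.
move=> Q_indep; apply: (exists_gt_monomials _ _ (\max_(i < k) size (a i))).
move=> ns size_ns uniq_ns geD.
have -> : (fun j : 'I_l => nth 0 [seq 'X^n | n <- ns] j) =
          (fun j : 'I_l => 'X^(nth 0%N ns j) : M).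
  by apply: functional_extensionality => j; rewrite (nth_map 0%N) ?size_ns.
apply: Q_indep; first exact: lin_indep_monomials.
exact: trivial_meet_monomials.
Qed.

(** * Choosing a generic tuple *)

Definition rel_of_code {B N} (c : {ffun 'I_B -> 'I_(2 * N).+1}) (i : nat) :
    int :=
  if insub i is Some j then (c j)%:Z - N%:Z else 0.

Lemma rel_of_code_onto B N f : bounded N f ->
  exists c : {ffun 'I_B -> 'I_(2 * N).+1},
    forall i, (i < B)%N -> rel_of_code c i = f i.
Proof.
move=> bf; exists [ffun i : 'I_B => inord (absz (f i + N%:Z))] => i ltiB.
by rewrite /rel_of_code insubT /= ffunE /= inordK; have := bf i; lia.
Qed.

Definition bad_values B N {k} (a : 'I_k -> M) (p : seq M) : seq M :=
  [seq solve_at B (env a p) (k + size p) (rel_of_code c)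
  | c <- enum {ffun 'I_B -> 'I_(2 * N).+1}].

Lemma generic_rcons B N k (a : 'I_k -> M) p y : (k + size p < B)%N ->
  generic B N a p -> y \notin bad_values B N a p -> generic B N a (rcons p y).
Proof.
move=> ltB gen_p y_good f bf; rewrite env_rcons.
have [fp0 | nzfp] := eqVneq (f (k + size p)%N) 0.
  rewrite zcomb_upd // fp0 mulr0z addr0 => f0 j.
  rewrite size_rcons ltnS leq_eqVlt => /orP[/eqP -> // | ltj].
  exact: gen_p.
move=> /eqP; rewrite zcomb_upd_eq0 // => /eqP y_sol; case/negP: y_good.
have [c fc] := rel_of_code_onto B N f bf.
apply/mapP; exists c; first by rewrite mem_enum.
by rewrite y_sol /solve_at (eq_zcomb _ _ _ _ fc) fc.
Qed.

Lemma exists_gt_avoid {K} {P Q : seq M -> Prop} {bad : seq M -> seq M} {L} :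
  (forall p, size (bad p) <= K)%N ->
  (forall p y, (size p < L)%N -> P p -> y \notin bad p -> P (rcons p y)) ->
  forall m p, (size p + m = L)%N -> P p ->
  exists_gt K m (fun ys => Q (p ++ ys)) ->
  exists ys, [/\ size ys = m, P (p ++ ys) & Q (p ++ ys)].
Proof.
move=> size_bad P_rcons; elim=> [|m IH] p size_p Pp /=.
  by move=> Qp; exists [::]; rewrite cats0 in Qp *.
move=> [s [size_s [uniq_s Qs]]].
have /allPn[y s_y y_good] : ~~ all (fun y => y \in bad p) s.
  apply/negP => /allP s_bad; have := uniq_leq_size uniq_s s_bad.
  by rewrite size_s leqNgt ltnS size_bad.
have [|||ys [size_ys Pys Qys]] := IH (rcons p y).
- by rewrite size_rcons addSnnS.
- by apply: P_rcons => //; lia.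
- have := Qs y s_y; congr (exists_gt _ _ _).
  by apply: functional_extensionality => ys; rewrite cat_rcons.
by exists (y :: ys); rewrite -cat_rcons; split => //=; rewrite size_ys.
Qed.

Lemma exists_gt_generic {B N k l} (a : 'I_k -> M) {Q : seq M -> Prop} :
  (k + l <= B)%N -> exists_gt #|{ffun 'I_B -> 'I_(2 * N).+1}| l Q ->
  exists2 ys, size ys = l /\ generic B N a ys & Q ys.
Proof.
move=> leB egt.
have size_bad p :
    (size (bad_values B N a p) <= #|{ffun 'I_B -> 'I_(2 * N).+1}|)%N.
  by rewrite size_map -cardE.
have gen_rcons p y : (size p < l)%N -> generic B N a p ->
    y \notin bad_values B N a p -> generic B N a (rcons p y).
  by move=> ltpl; apply: generic_rcons; lia.
have gen_nil : generic B N a [::] by [].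
have [ys [size_ys gen_ys Qys]] :=
  exists_gt_avoid (Q := Q) size_bad gen_rcons l [::] erefl gen_nil egt.
by exists ys.
Qed.

Theorem mainTheorem2 (k l : nat) (R : ('I_k -> M) -> ('I_l -> M) -> Prop)
  (hR : definable R) :
  exists K : nat, forall a : 'I_k -> M,
    ((exists b : 'I_l -> M, [/\ lin_indep b, trivial_meet a b & R a b]) <->
     (forall b : 'I_l -> M, lin_indep b -> trivial_meet a b -> R a b)) /\
    ((forall b : 'I_l -> M, lin_indep b -> trivial_meet a b -> R a b) <->
     exists_gt K l (fun ys => R a (fun j : 'I_l => nth 0 ys j))).
Proof.
have [phi defR] := hR.
pose B := (var_bound phi + k + l)%N; pose N := rel_rank phi.
have lephiB : (var_bound phi <= B)%N by rewrite /B -addnA leq_addr.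
have leB : (k + l <= B)%N by rewrite /B -addnA leq_addl.
exists #|{ffun 'I_B -> 'I_(2 * N).+1}| => a.
have all_of_generic := definable_generic_indep defR lephiB leB a.
split; split.
- move=> [b [indep_b meet_b Rb]].
  apply: (all_of_generic [seq b j | j <- enum 'I_l]).
  + by rewrite size_map size_enum_ord.
  + exact: lin_indep_generic.
  + by rewrite fun_nth_map_enum.
- move=> R_all; have [b [indep_b meet_b]] := exists_indep_over l a.
  by exists b; split; last apply: R_all.
- exact: exists_gt_indep.
- case/(exists_gt_generic a leB) => ys [size_ys gen_ys].
  exact: all_of_generic.
Qed.
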